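(* There is a deterministic distributed algorithm in the CONGEST model which, given an $n$-vertex graph $G=(V,E,w)$ with positive edge weights and a parameter $\epsilon\in(0,1)$, computes a weighted $\epsilon$-defective coloring of $G$ using $O(\epsilon^{-2})$ colors, in $O(\log^* n)$ communication rounds.
   Context: CONGEST model: the network is the graph $G$, vertices have unique identifiers from $\{1,\dots,n\}$ and are processors, and in each synchronous round every vertex sends a message of $O(\log n)$ bits to each neighbour; complexity is the number of rounds. For a coloring $\varphi:V\to[c]$ of a positively edge-weighted graph, let $E_m(v)$ be the set of monochromatic edges at $v$ (edges $(u,v)$ with $\varphi(u)=\varphi(v)$), $defect_w(v)=\sum_{e\in E_m(v)}w(e)$ and $w(v)=\sum_{e\ni v}w(e)$. The coloring is a weighted $\epsilon$-defective coloring if $defect_w(v)\le \epsilon\, w(v)$ for every $v\in V$. *)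

From HB Require Import structures.
From mathcomp Require Import all_boot all_order all_algebra.
Set Implicit Arguments. Unset Strict Implicit. Unset Printing Implicit Defensive.
Import Order.TTheory GRing.Theory Num.Theory.
Local Open Scope ring_scope.

Fixpoint logstar_aux (fuel n : nat) : nat :=
  match fuel with
  | 0 => 0
  | f.+1 => if (n <= 1)%N then 0 else (logstar_aux f (trunc_log 2 n)).+1
  end.
Definition logstar (n : nat) : nat := logstar_aux n n.

Definition simple_graph (n : nat) (e : rel 'I_n) : Prop :=
  (forall u v, e u v = e v u) /\ (forall v, ~~ e v v).

Definition pos_weights (R : realFieldType) (n : nat) (e : rel 'I_n)
  (w : 'I_n -> 'I_n -> R) : Prop :=
  (forall u v, w u v = w v u) /\ (forall u v, e u v -> 0 < w u v).

Definition defect_w (R : realFieldType) (n : nat) (e : rel 'I_n)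
  (w : 'I_n -> 'I_n -> R) (col : 'I_n -> nat) (v : 'I_n) : R :=
  \sum_(u : 'I_n | e v u && (col u == col v)) w v u.

Definition wdeg (R : realFieldType) (n : nat) (e : rel 'I_n)
  (w : 'I_n -> 'I_n -> R) (v : 'I_n) : R :=
  \sum_(u : 'I_n | e v u) w v u.

Definition weighted_defective_coloring (R : realFieldType) (n : nat)
  (e : rel 'I_n) (w : 'I_n -> 'I_n -> R) (eps : R) (col : 'I_n -> nat) : Prop :=
  forall v, defect_w e w col v <= eps * wdeg e w v.

(* ---------- Deterministic synchronous message passing (CONGEST) ----------
   A uniform deterministic algorithm: each node has a local state of an
   arbitrary type St (unbounded local computation).  Initially a node knows n,
   eps, its own identifier in {1..n}, and the list of (identifier, weight) of
   its incident edges.  In each round every node sends to each neighbour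
   (addressed by identifier) a bit string, then updates its state from the
   list of (sender identifier, message) it received. *)
Record algorithm (R : realFieldType) := Algorithm {
  St : Type;
  init : nat -> R -> nat -> seq (nat * R) -> St;
  send : St -> nat -> bitseq;
  recv : St -> seq (nat * bitseq) -> St;
  output : St -> nat
}.

Section Run.
Variables (R : realFieldType) (A : algorithm R) (n : nat) (e : rel 'I_n)
  (w : 'I_n -> 'I_n -> R) (eps : R).

Definition ident (v : 'I_n) : nat := (val v).+1.

Definition local_input (v : 'I_n) : seq (nat * R) :=
  [seq (ident u, w v u) | u <- enum 'I_n & e v u].

Fixpoint state (t : nat) (v : 'I_n) : St A :=
  match t with
  | 0 => init A n eps (ident v) (local_input v)
  | t'.+1 => recv (state t' v)
       [seq (ident u, send (state t' u) (ident v)) | u <- enum 'I_n & e v u]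
  end.

Definition bandwidth_ok (T B : nat) : Prop :=
  forall t u v, (t < T)%N -> e u v -> (size (send (state t u) (ident v)) <= B)%N.

Definition run_output (T : nat) (v : 'I_n) : nat := output (state T v).
End Run.

From mathcomp Require Import all_boot all_order all_algebra.
From mathcomp Require Import finfield.
From mathcomp Require Import zify ring.
Import Order.TTheory GRing.Theory Num.Theory.
Set Implicit Arguments.
Unset Strict Implicit.
Unset Printing Implicit Defensive.

(* Kuhn-style defective color reduction, starting from the identifiers as
   colors.  A color [c < q ^ d.+1] is read as a polynomial [p_c] of degree at
   most [d] over the field with [q] elements; a node of color [c] learns its
   neighbours' colors, picks the point [x] minimizing the weight of the
   differently colored neighbours [u] with [p_u(x) = p_c(x)], and takes
   [(x, p_c(x)) < q ^ 2] as its new color.  Two distinct polynomials agree on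
   at most [d] points, so averaging over [x] bounds the new defect by
   [d / q * w(v)].  With [2 ^ -l] about [eps] and [q] about [2 ^ l * b ^ 2]
   for [b]-bit colors, each round shrinks [b] to [O(l + log b)] at defect cost
   [2 ^ -(l + 3 + log2 b)]; after [O(log* n)] rounds [b = O(l)], one more
   round of degree 7 leaves [O(2 ^ 2l) = O(eps ^ -2)] colors, and the defect
   costs telescope to at most [2 ^ -(l + 2) <= eps]. *)

Fixpoint bits_of (k c : nat) : bitseq :=
  if k is k'.+1 then odd c :: bits_of k' c./2 else [::].

Fixpoint nat_of_bits (s : bitseq) : nat :=
  if s is b :: s' then (b + (nat_of_bits s').*2)%N else 0%N.

Lemma size_bits_of k c : size (bits_of k c) = k.
Proof. by elim: k c => //= k IHk c; rewrite IHk. Qed.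

Lemma bits_ofK k c : c < 2 ^ k -> nat_of_bits (bits_of k c) = c.
Proof.
elim: k c => [|k IHk] c /=; first by rewrite expn0 ltnS leqn0 => /eqP ->.
by move=> ltc; rewrite IHk ?odd_double_half // ltn_half_double -muln2 -expnSr.
Qed.

Lemma eq_from_digits q d c c' : 0 < q -> c < q ^ d.+1 -> c' < q ^ d.+1 ->
  (forall j, j <= d -> (c %/ q ^ j) %% q = (c' %/ q ^ j) %% q) -> c = c'.
Proof.
move=> q_gt0; elim: d c c' => [|d IHd] c c' ltc ltc' eq_digits.
  by have := eq_digits 0 (leqnn _); rewrite expn0 !divn1 !modn_small // -(expn1 q).
have eq0 := eq_digits 0 isT; rewrite expn0 !divn1 in eq0.
rewrite (divn_eq c q) (divn_eq c' q) eq0; congr (_ * _ + _).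
apply: IHd; rewrite ?ltn_divLR -?expnSr // => j le_jd.
by have := eq_digits j.+1 le_jd; rewrite expnS !divnMA.
Qed.

Local Notation log2 := (trunc_log 2).

Lemma log2_bounds b : 0 < b -> 2 ^ log2 b <= b < 2 ^ (log2 b).+1.
Proof. by move=> b_gt0; rewrite trunc_logP ?trunc_log_ltn. Qed.

Lemma linear_le_exp2 t : 16 * t <= 2 ^ t + 96.
Proof.
elim: t => // t IHt; have [lt_t4|le4t] := ltnP t 4.
  by case: t lt_t4 IHt => [|[|[|[|]]]].
have le16 : 16 <= 2 ^ t := leq_pexp2l (isT : 0 < 2) le4t.
by rewrite expnS; lia.
Qed.

Definition phase_exp (l b : nat) : nat := l + 3 + 2 * log2 b.

(* Entry [(s, d, b)]: colors below [2 ^ b] are reduced by polynomials of degree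
   [d] over the field with [2 ^ s.+1] elements, giving colors below
   [2 ^ (2 * s.+1)]; [l] is the target defect exponent and [f] is fuel.
   Above [8 * l + 128] bits a phase at least halves the bit length; below it
   one phase of degree 7 suffices, as [2 ^ (8 * l + 128) = (2 ^ (l + 16)) ^ 8]. *)
Fixpoint phases (l f b : nat) : seq (nat * nat * nat) :=
  if f is f'.+1 then
    if 8 * l + 128 < b then
      (phase_exp l b, b.-1, b) :: phases l f' (2 * (phase_exp l b).+1)
    else [:: (l + 15, 7, b)]
  else [::].

Lemma phase_bits_half l b : 8 * l + 128 < b -> 2 * (2 * (phase_exp l b).+1) <= b.
Proof.
move=> lt_b; have /andP[le_b _] := log2_bounds (leq_ltn_trans (leq0n _) lt_b).
by have := linear_le_exp2 (log2 b); rewrite /phase_exp; lia.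
Qed.

Lemma log2_phase_bits_lt l b :
  8 * l + 128 < b -> log2 (2 * (phase_exp l b).+1) < log2 b.
Proof.
move=> /phase_bits_half le_b; rewrite -trunc_log2_double ?muln_gt0 //.
by apply: leq_trunc_log; rewrite -muln2 mulnC.
Qed.

Lemma phases_bits_le l f b :
  all (fun p : nat * nat * nat => p.2 <= b) (phases l f b).
Proof.
elim: f b => //= f IHf b; case: ifP => lt_b /=; rewrite ?leqnn //.
apply: sub_all (IHf _) => p /= /leq_trans; apply; have := phase_bits_half lt_b; lia.
Qed.

Lemma size_phases_small l j f b : b <= 128 * 2 ^ j -> size (phases l f b) <= j.+1.
Proof.
elim: j f b => [|j IHj] [|f] b le_b //=; case: ifP => lt_b //=.
  by move: le_b lt_b; rewrite expn0; lia.
by rewrite ltnS IHj //; have := phase_bits_half lt_b; move: le_b; rewrite expnS; lia.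
Qed.

Lemma mid_phase_degree l b : 0 < b ->
  b.-1 * 2 ^ (l + 3 + log2 b) <= 2 ^ (phase_exp l b).+1.
Proof.
move=> b_gt0; have /andP[_ lt_b] := log2_bounds b_gt0.
have le_b : b.-1 <= 2 ^ (log2 b).+1 by rewrite (leq_trans _ (ltnW lt_b)) ?leq_pred.
rewrite (leq_trans (leq_mul le_b (leqnn _))) // -expnD leq_pexp2l // /phase_exp; lia.
Qed.

Lemma last_phase_degree l : 7 * 2 ^ (l + 3) <= 2 ^ (l + 15).+1.
Proof.
rewrite (_ : (l + 15).+1 = 13 + (l + 3)); last by lia.
by rewrite [2 ^ (13 + _)]expnD; apply: leq_mul.
Qed.

Lemma iter_log2_le1 k x : x <= 1 -> iter k log2 x <= 1.
Proof.
elim: k => //= k IHk /IHk.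
by case: (iter k log2 x) => [|[|]] // _; rewrite ?trunc_log0 ?trunc_log1.
Qed.

Lemma iter_logstar_aux f m : m <= f -> iter (logstar_aux f m) log2 m <= 1.
Proof.
elim: f m => [|f IHf] m /=; first by rewrite leqn0 => /eqP ->.
case: ifP => // lt1m le_mf; rewrite iterSr IHf //.
have gt1m : 1 < m by rewrite ltnNge lt1m.
have /andP[le_m _] := log2_bounds (ltnW gt1m).
have := ltn_expl (log2 m) (isT : 1 < 2); lia.
Qed.

Lemma iter_log2_gt1 n j : 1 < iter j log2 n -> j < logstar n.
Proof.
move=> gt1; rewrite ltnNge; apply/negP => le_j; move: gt1.
by rewrite -(subnK le_j) iterD ltnNge iter_log2_le1 // iter_logstar_aux.
Qed.

Lemma log2_lt_add5 x y : 0 < x -> x < 16 * y -> log2 x < log2 y + 5.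
Proof.
move=> x_gt0 lt_x; rewrite -(ltn_exp2l _ _ (isT : 1 < 2)).
have /andP[le_x _] := log2_bounds x_gt0; have := trunc_log_ltn y (isT : 1 < 2).
rewrite expnS expnD (_ : 2 ^ 5 = 32) //; lia.
Qed.

(* Invariant: entering phase [k], the bit length is linear in the [k.+1]-th
   iterated logarithm of [n], or already small enough for the last phase. *)
Lemma size_phases n l f b k :
  b <= 8 * iter k.+1 log2 n + 48 \/ b <= 8 * l + 128 ->
  size (phases l f b) <= logstar n - k + 4.
Proof.
elim: f b k => [|f IHf] b k le_b //.
have [lt_b|le_bl] := ltnP (8 * l + 128) b; last by rewrite /= ltnNge le_bl /=; lia.
have {}le_b : b <= 8 * iter k.+1 log2 n + 48 by lia.
have [lt_u|le_u] := ltnP (iter k.+1 log2 n) 48.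
  have := @size_phases_small l 2 f.+1 b; lia.
have lt_k := iter_log2_gt1 (leq_trans (isT : 1 < 48) le_u).
have lt_log2 : log2 b < iter k.+2 log2 n + 5.
  by apply: (log2_lt_add5 (y := iter k.+1 log2 n)); lia.
have := IHf (2 * (phase_exp l b).+1) k.+1; set u := iter k.+2 log2 n.
by rewrite /= lt_b /= /phase_exp; lia.
Qed.

Local Open Scope ring_scope.

Lemma finField_card_gt0 (F : finFieldType) : (0 < #|F|)%N.
Proof. by apply/card_gt0P; exists 0. Qed.

Section ReedSolomon.
Variables (F : finFieldType) (d : nat).

Definition rs_poly (c : nat) : {poly F} :=
  \poly_(j < d.+1) nth 0 (enum F) ((c %/ #|F| ^ j) %% #|F|)%N.

Lemma rs_poly_inj c c' : (c < #|F| ^ d.+1)%N -> (c' < #|F| ^ d.+1)%N ->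
  rs_poly c = rs_poly c' -> c = c'.
Proof.
move=> ltc ltc' eq_p.
apply: (@eq_from_digits #|F| d) => //; first exact: finField_card_gt0.
move=> j le_jd.
have := congr1 (fun p : {poly F} => p`_j) eq_p; rewrite !coef_poly ltnS le_jd.
move/eqP; rewrite nth_uniq ?enum_uniq // -?cardE ?ltn_mod ?finField_card_gt0 //.
by move/eqP.
Qed.

Lemma card_rs_poly_agree c c' : (c < #|F| ^ d.+1)%N -> (c' < #|F| ^ d.+1)%N ->
  c != c' -> (#|[pred x : F | (rs_poly c).[x] == (rs_poly c').[x]]| <= d)%N.
Proof.
move=> ltc ltc' neq_cc'; set p := rs_poly c - rs_poly c'.
have p_neq0 : p != 0.
  by rewrite subr_eq0; apply: contra neq_cc' => /eqP /(rs_poly_inj ltc ltc') ->.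
have size_p : (size p <= d.+1)%N.
  by rewrite (leq_trans (size_polyD _ _)) // size_polyN geq_max !size_poly.
rewrite cardE -ltnS (leq_trans _ size_p) //.
apply: (max_poly_roots p_neq0); last exact: enum_uniq.
by apply/allP => x; rewrite mem_enum inE /root !hornerE subr_eq0.
Qed.

End ReedSolomon.

Section ColorReduction.
Variables (R : realFieldType) (F : finFieldType) (d : nat).

(* [L] lists the (weight, color) pairs seen by a node of color [c]; [x] costs
   the weight of the differently colored neighbours whose polynomial agrees
   with that of [c] at [x]. *)
Definition clash_weight (c : nat) (L : seq (R * nat)) (x : F) : R :=
  \sum_(p <- L | (p.2 != c) && ((rs_poly F d p.2).[x] == (rs_poly F d c).[x])) p.1.

Definition best_point (c : nat) (L : seq (R * nat)) : F :=
  [arg min_(x < 0) clash_weight c L x]%O.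

Definition reduce_color (c : nat) (L : seq (R * nat)) : nat :=
  let x := best_point c L in (enum_rank x * #|F| + enum_rank (rs_poly F d c).[x])%N.

Lemma reduce_color_lt c L : (reduce_color c L < #|F| ^ 2)%N.
Proof.
rewrite /reduce_color expnS expn1; set a := enum_rank _; set b := enum_rank _.
rewrite (@leq_trans (a * #|F| + #|F|)) ?ltn_add2l ?ltn_ord //.
by rewrite -mulSnr leq_mul2r ltn_ord orbT.
Qed.

Lemma reduce_color_inj c L c' L' : reduce_color c L = reduce_color c' L' ->
  best_point c' L' = best_point c L /\
  (rs_poly F d c').[best_point c L] = (rs_poly F d c).[best_point c L].
Proof.
move=> eq_red; have := congr1 (modn^~ #|F|) eq_red.
have := congr1 (divn^~ #|F|) eq_red.
rewrite /reduce_color /= !modnMDl !divnMDl ?finField_card_gt0 //.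
rewrite !modn_small ?ltn_ord //.
rewrite !divn_small ?ltn_ord // !addn0.
by move=> /val_inj /enum_rank_inj eq_best /val_inj /enum_rank_inj; rewrite eq_best.
Qed.

Lemma card_mul_clash_weight_best c L :
  #|F|%:R * clash_weight c L (best_point c L) <= \sum_x clash_weight c L x.
Proof.
rewrite mulr_natl -sumr_const; apply: ler_sum => x _.
by rewrite /best_point; case: arg_minP => // y _; apply.
Qed.

Variables (n : nat) (e : rel 'I_n) (w : 'I_n -> 'I_n -> R).
Hypothesis w_gt0 : forall u v, e u v -> 0 < w u v.

Definition nbr_colors (col : 'I_n -> nat) (v : 'I_n) : seq (R * nat) :=
  [seq (w v u, col u) | u <- enum 'I_n & e v u].

Definition reduce_step (col : 'I_n -> nat) (v : 'I_n) : nat :=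
  reduce_color (col v) (nbr_colors col v).

Lemma clash_weightE col v x : clash_weight (col v) (nbr_colors col v) x =
  \sum_u (if e v u && ((col u != col v) &&
                       ((rs_poly F d (col u)).[x] == (rs_poly F d (col v)).[x]))
          then w v u else 0).
Proof. by rewrite /clash_weight big_map big_filter_cond enumT big_mkcond. Qed.

Lemma defect_reduce_step_le col v :
  defect_w e w (reduce_step col) v <=
  defect_w e w col v + clash_weight (col v) (nbr_colors col v)
                                    (best_point (col v) (nbr_colors col v)).
Proof.
rewrite /defect_w clash_weightE big_mkcond [X in _ <= X + _]big_mkcond -big_split.
apply: ler_sum => u _ /=; case: (boolP (e v u)) => //= evu; last by rewrite addr0.
have w_ge0 := ltW (w_gt0 evu).
case: eqP => [/reduce_color_inj [-> ->]|_]; last first.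
  by apply: addr_ge0; case: ifP.
by rewrite eqxx andbT; case: eqP; rewrite ?addr0 ?add0r.
Qed.

Lemma sum_clash_weight_le col v : (forall u, col u < #|F| ^ d.+1)%N ->
  \sum_x clash_weight (col v) (nbr_colors col v) x <= d%:R * wdeg e w v.
Proof.
move=> col_lt; under eq_bigr => x _ do rewrite clash_weightE.
rewrite /wdeg mulr_sumr [X in _ <= X]big_mkcond exchange_big.
apply: ler_sum => u _; case: (boolP (e v u)) => /= evu; last by rewrite big1 ?mulr0.
have w_ge0 := ltW (w_gt0 evu).
case: (eqVneq (col u) (col v)) => /= [_|neq_col]; first by rewrite big1 ?mulr_ge0.
rewrite -big_mkcond sumr_const -(mulr_natl (w v u)); apply: ler_wpM2r => //.
by rewrite ler_nat card_rs_poly_agree.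
Qed.

Lemma defect_reduce_step col : (forall u, col u < #|F| ^ d.+1)%N -> forall v,
  defect_w e w (reduce_step col) v <=
  defect_w e w col v + d%:R / #|F|%:R * wdeg e w v.
Proof.
move=> col_lt v; apply: (le_trans (defect_reduce_step_le col v)); rewrite lerD2l.
rewrite mulrAC ler_pdivlMr ?ltr0n ?finField_card_gt0 // mulrC.
exact: le_trans (card_mul_clash_weight_best _ _) (sum_clash_weight_le v col_lt).
Qed.

End ColorReduction.

Section InvPow2.
Variable R : realFieldType.

Definition inv_pow2 (k : nat) : R := ((2 ^ k)%:R)^-1.

Lemma inv_pow2_gt0 k : 0 < inv_pow2 k.
Proof. by rewrite invr_gt0 ltr0n expn_gt0. Qed.

Lemma inv_pow2S_add k : inv_pow2 k.+1 + inv_pow2 k.+1 = inv_pow2 k.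
Proof.
have pow_neq0 : (2 ^ k)%:R != 0 :> R by rewrite pnatr_eq0 expn_eq0.
by rewrite /inv_pow2 expnS natrM; field.
Qed.

Lemma inv_pow2_le k m : (k <= m)%N -> inv_pow2 m <= inv_pow2 k.
Proof.
move=> le_km; rewrite lef_pV2 ?posrE ?ltr0n ?expn_gt0 // ler_nat.
exact: leq_pexp2l.
Qed.

Lemma ratio_le_inv_pow2 d q k : (0 < q)%N -> (d * 2 ^ k <= q)%N ->
  d%:R / q%:R <= inv_pow2 k.
Proof.
move=> q_gt0 le_dq; rewrite /inv_pow2 ler_pdivrMr ?ltr0n //.
by rewrite ler_pdivlMl ?ltr0n ?expn_gt0 // -natrM ler_nat mulnC.
Qed.

End InvPow2.

Definition GF (s : nat) : finFieldType :=
  sval (pPrimePowerField (isT : prime 2) (ltn0Sn s)).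

Lemma card_GF s : #|GF s| = (2 ^ s.+1)%N.
Proof. by rewrite /GF; case: pPrimePowerField. Qed.

Section Phases.
Variables (R : realFieldType) (n : nat) (e : rel 'I_n) (w : 'I_n -> 'I_n -> R).
Hypothesis w_gt0 : forall u v, e u v -> 0 < w u v.

(* Neighbours' colors are those decoded from their [b]-bit messages. *)
Definition phase_step (p : nat * nat * nat) (col : 'I_n -> nat) (v : 'I_n) :
    nat :=
  let: (s, d, b) := p in
  reduce_color (GF s) d (col v)
    [seq (w v u, nat_of_bits (bits_of b (col u))) | u <- enum 'I_n & e v u].

Definition run_phases (ps : seq (nat * nat * nat)) (col : 'I_n -> nat) :
    'I_n -> nat :=
  foldl (fun c p => phase_step p c) col ps.

Lemma phase_stepE s d b col : (forall u, col u < 2 ^ b)%N ->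
  phase_step (s, d, b) col =1 reduce_step (GF s) d e w col.
Proof.
by move=> col_lt v; congr reduce_color; apply: eq_map => u; rewrite bits_ofK.
Qed.

Lemma phase_step_lt s d b col v : (phase_step (s, d, b) col v < 2 ^ (2 * s.+1))%N.
Proof. by rewrite mulnC expnM -card_GF reduce_color_lt. Qed.

Lemma eq_defect_w (c1 c2 : 'I_n -> nat) v : c1 =1 c2 ->
  defect_w e w c1 v = defect_w e w c2 v.
Proof. by move=> eq_c; apply: eq_bigl => u; rewrite !eq_c. Qed.

Lemma wdeg_ge0 v : 0 <= wdeg e w v.
Proof. by apply: sumr_ge0 => u /w_gt0 /ltW. Qed.

Lemma defect_phase_step s d b k col : (2 ^ b <= (2 ^ s.+1) ^ d.+1)%N ->
  (d * 2 ^ k <= 2 ^ s.+1)%N -> (forall u, col u < 2 ^ b)%N -> forall v,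
  defect_w e w (phase_step (s, d, b) col) v <=
  defect_w e w col v + inv_pow2 R k * wdeg e w v.
Proof.
move=> le_cap le_dk col_lt v; rewrite (eq_defect_w v (phase_stepE _ _ col_lt)).
apply: le_trans (defect_reduce_step w_gt0 _ v) _.
  by move=> u; rewrite card_GF (leq_trans (col_lt u)).
by rewrite lerD2l ler_wpM2r ?wdeg_ge0 // card_GF ratio_le_inv_pow2 ?expn_gt0.
Qed.

(* The defect accumulated before entering a phase on [b]-bit colors stays
   below [2 ^ -(l + 3 + log2 b)]; since [log2 b] drops by at least one per
   phase, the sum of all phases telescopes below [2 ^ -(l + 2)]. *)
Lemma run_phases_ok l f b col (D : R) : (0 < b <= f)%N ->
  (forall u, col u < 2 ^ b)%N ->
  (forall v, defect_w e w col v <= D * wdeg e w v) ->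
  D <= inv_pow2 R (l + 3 + log2 b) ->
  (forall v, defect_w e w (run_phases (phases l f b) col) v <=
             inv_pow2 R (l + 2) * wdeg e w v) /\
  (forall v, run_phases (phases l f b) col v < 2 ^ (2 * (l + 16)))%N.
Proof.
elim: f b col D => [|f IHf] b col D /andP[b_gt0 le_bf] col_lt le_defect le_D.
  by case: b b_gt0 le_bf {col_lt le_D}.
rewrite /=; case: ifP => [lt_b|/negbT]; last rewrite -leqNgt => le_b /=.
  apply: (IHf _ _ (D + inv_pow2 R (l + 3 + log2 b))) => [|u|v|].
  - by have := phase_bits_half lt_b; lia.
  - exact: phase_step_lt.
  - apply: le_trans (defect_phase_step _ _ col_lt v) _.
    + by rewrite -expnM leq_pexp2l // prednK // leq_pmull.
    + exact: mid_phase_degree.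
    + by rewrite mulrDl lerD2r le_defect.
  - rewrite (_ : (l + 3 + log2 b = (l + 2 + log2 b).+1)%N) in le_D *; last by lia.
    apply: le_trans (lerD le_D (lexx _)) _; rewrite inv_pow2S_add inv_pow2_le //.
    by have := log2_phase_bits_lt lt_b; lia.
split=> v; last by rewrite (_ : (l + 16 = (l + 15).+1)%N) ?addnS // phase_step_lt.
apply: le_trans (defect_phase_step _ _ col_lt v) _.
- by rewrite -expnM leq_pexp2l //; lia.
- exact: last_phase_degree.
rewrite -(inv_pow2S_add R (l + 2)%N) -addnS mulrDl lerD2r.
apply: le_trans (le_defect v) (ler_wpM2r (wdeg_ge0 v) _).
by apply: le_trans le_D (inv_pow2_le _ _); lia.
Qed.

End Phases.

(* The search range [0, n] suffices when [n * eps ^ 2 > 1], the only case where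
   [log_inv_eps] is used. *)
Definition log_inv_eps (R : realFieldType) (n : nat) (eps : R) : nat :=
  find (fun k => 1 <= (2 ^ k)%:R * eps) (iota 0 n.+1).

(* With [n <= eps ^- 2] the identifiers are already few enough colors. *)
Definition schedule (R : realFieldType) (n : nat) (eps : R) :
    seq (nat * nat * nat) :=
  if n%:R * eps ^+ 2 <= 1 then [::]
  else phases (log_inv_eps n eps) (log2 n).+1 (log2 n).+1.

Record node_state (R : realFieldType) := NodeState {
  ns_size : nat; ns_eps : R; ns_edges : seq (nat * R); ns_round : nat; ns_color : nat }.

Section ColoringAlgorithm.
Variable R : realFieldType.
Implicit Type st : node_state R.

Definition current_phase st : option (nat * nat * nat) :=
  let ps := schedule (ns_size st) (ns_eps st) in
  if (ns_round st < size ps)%N then Some (nth (0, 0, 0)%N ps (ns_round st))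
  else None.

Definition ca_init n eps id (edges : seq (nat * R)) : node_state R :=
  NodeState n eps edges 0 id.-1.

Definition ca_send st (_ : nat) : bitseq :=
  if current_phase st is Some (_, _, b) then bits_of b (ns_color st) else [::].

(* Messages arrive in the order of [ns_edges], hence the [zip]. *)
Definition ca_recv st (msgs : seq (nat * bitseq)) : node_state R :=
  NodeState (ns_size st) (ns_eps st) (ns_edges st) (ns_round st).+1
    (if current_phase st is Some (s, d, _) then
       reduce_color (GF s) d (ns_color st)
         [seq (p.1.2, nat_of_bits p.2.2) | p <- zip (ns_edges st) msgs]
     else ns_color st).

Definition coloring_alg : algorithm R :=
  Algorithm ca_init ca_send ca_recv (@ns_color R).

End ColoringAlgorithm.

Section Simulation.
Variables (R : realFieldType) (n : nat) (e : rel 'I_n).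
Variables (w : 'I_n -> 'I_n -> R) (eps : R).

Lemma state_coloring_alg t v : state (coloring_alg R) e w eps t v =
  NodeState n eps (local_input e w v) t
            (run_phases e w (take t (schedule n eps)) val v).
Proof.
elim: t v => [|t IHt] v; first by rewrite take0.
rewrite /= IHt; under eq_map => u do rewrite IHt.
rewrite /ca_recv /ca_send /current_phase /=; congr NodeState.
case: ltnP => [lt_t|le_t]; last by rewrite !take_oversize ?(leq_trans le_t).
rewrite (take_nth (0, 0, 0)%N lt_t) /run_phases foldl_rcons -/(run_phases _ _ _ _).
case: nth => [[s d] b] /=.
by rewrite /local_input zip_map -map_comp.
Qed.

End Simulation.

Section LogInvEps.
Variables (R : realFieldType) (n : nat) (eps : R).
Hypotheses (eps_gt0 : 0 < eps) (eps_lt1 : eps < 1) (big_n : 1 < n%:R * eps ^+ 2).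

Lemma log_inv_eps_spec : [/\ (0 < log_inv_eps n eps)%N,
  1 <= (2 ^ log_inv_eps n eps)%:R * eps &
  (2 ^ (log_inv_eps n eps).-1)%:R * eps < 1].
Proof.
have has_k : has (fun k => 1 <= (2 ^ k)%:R * eps) (iota 0 n.+1).
  apply/hasP; exists n; first by rewrite mem_iota leq0n add0n ltnSn.
  have le_eps2 : eps ^+ 2 <= eps by rewrite expr2 ger_pMl // ltW.
  have le_n2n : n%:R <= (2 ^ n)%:R :> R by rewrite ler_nat ltnW // ltn_expl.
  apply: le_trans (ltW big_n) _.
  exact: ler_pM (ler0n _ _) (exprn_ge0 2 (ltW eps_gt0)) le_n2n le_eps2.
set l := log_inv_eps n eps.
have lt_l : (l < n.+1)%N by rewrite -[n.+1](size_iota 0) -has_find.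
have := nth_find 0%N has_k.
rewrite -/(log_inv_eps n eps) -/l nth_iota // add0n => le1.
have l_gt0 : (0 < l)%N.
  by rewrite lt0n; apply: contraTneq le1 => ->; rewrite mul1r -ltNge.
have lt_pred : (l.-1 < l)%N by rewrite ltn_predL.
have := before_find 0%N lt_pred; rewrite nth_iota ?add0n /=; last by lia.
by move/negbT; rewrite -ltNge.
Qed.

End LogInvEps.

Lemma size_schedule (R : realFieldType) n (eps : R) :
  (size (schedule n eps) <= 4 * (logstar n).+1)%N.
Proof.
rewrite /schedule; case: ifP => // _.
have le_b : ((log2 n).+1 <= 8 * iter 1 log2 n + 48)%N by rewrite /=; lia.
by have := @size_phases n (log_inv_eps n eps) (log2 n).+1 _ 0 (or_introl le_b); lia.
Qed.

Lemma schedule_bits_le (R : realFieldType) n (eps : R) p :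
  p \in schedule n eps -> (p.2 <= (log2 n).+1)%N.
Proof.
by rewrite /schedule; case: ifP => // _; apply: (allP (phases_bits_le _ _ _)).
Qed.

Lemma bandwidth_coloring_alg (R : realFieldType) n e (w : 'I_n -> 'I_n -> R) eps T :
  bandwidth_ok (coloring_alg R) e w eps T (log2 n).+1.
Proof.
move=> t u v _ _; rewrite state_coloring_alg /= /ca_send /current_phase /=.
case: ltnP => // /(mem_nth (0, 0, 0)%N) /schedule_bits_le.
by case: nth => [[s d] b]; rewrite size_bits_of.
Qed.

Section Correctness.
Variables (R : realFieldType) (n : nat) (e : rel 'I_n).
Variables (w : 'I_n -> 'I_n -> R) (eps : R).
Hypotheses (e_irr : forall v, ~~ e v v) (w_gt0 : forall u v, e u v -> 0 < w u v).
Hypotheses (eps_gt0 : 0 < eps) (eps_lt1 : eps < 1).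

Local Notation coloring := (run_phases e w (schedule n eps) val).

Lemma defect_w_val v : defect_w e w val v = 0.
Proof.
rewrite /defect_w big_pred0 // => u; case: (eqVneq u v) => [->|neq_uv].
  by rewrite (negbTE (e_irr v)).
by rewrite (inj_eq val_inj) (negbTE neq_uv) andbF.
Qed.

Lemma run_schedule_large : 1 < n%:R * eps ^+ 2 ->
  (forall v, defect_w e w coloring v <=
             inv_pow2 R (log_inv_eps n eps + 2) * wdeg e w v) /\
  (forall v, coloring v < 2 ^ (2 * (log_inv_eps n eps + 16)))%N.
Proof.
rewrite /schedule ltNge => /negbTE ->; apply: (run_phases_ok w_gt0 (D := 0)).
- by rewrite leqnn.
- by move=> u; rewrite (leq_trans (ltn_ord u)) // ltnW // trunc_log_ltn.
- by move=> v; rewrite defect_w_val mul0r.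
- exact/ltW/inv_pow2_gt0.
Qed.

Lemma run_schedule_defective : weighted_defective_coloring e w eps coloring.
Proof.
move=> v; case: (ltrP 1 (n%:R * eps ^+ 2)) => [big_n|small_n]; last first.
  by rewrite /schedule small_n defect_w_val mulr_ge0 ?wdeg_ge0 ?ltW.
have [_ le1 _] := log_inv_eps_spec eps_gt0 eps_lt1 big_n.
have [defect_le _] := run_schedule_large big_n.
apply: le_trans (defect_le v) (ler_wpM2r (wdeg_ge0 w_gt0 v) _).
apply: le_trans (inv_pow2_le _ (leq_addr 2 _)) _.
by rewrite /inv_pow2 -[X in X <= _]mulr1 ler_pdivrMl ?ltr0n ?expn_gt0.
Qed.

Lemma run_schedule_lt v : (coloring v)%:R < (2 ^ 34)%:R / eps ^+ 2.
Proof.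
have eps2_gt0 : 0 < eps ^+ 2 by rewrite exprn_gt0.
rewrite ltr_pdivlMr //.
case: (ltrP 1 (n%:R * eps ^+ 2)) => [big_n|small_n]; last first.
  rewrite /schedule small_n /= (lt_le_trans _ (le_trans small_n _)) ?ler1n //.
  by rewrite ltr_pM2r // ltr_nat.
have [l_gt0 _ lt1] := log_inv_eps_spec eps_gt0 eps_lt1 big_n.
have [_ color_lt] := run_schedule_large big_n.
set l := log_inv_eps n eps in l_gt0 lt1 color_lt.
apply: (@lt_le_trans _ _ ((2 ^ (2 * (l + 16)))%:R * eps ^+ 2)).
  by rewrite ltr_pM2r // ltr_nat.
rewrite (_ : (2 * (l + 16) = 34 + l.-1 * 2)%N); last by lia.
rewrite expnD expnM natrM [((2 ^ l.-1) ^ 2)%:R]natrX -mulrA -exprMn ler_piMr //.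
by apply: exprn_ile1; [rewrite mulr_ge0 ?ler0n ?ltW | exact: ltW].
Qed.

End Correctness.

Theorem mainTheorem2 (R : realFieldType) :
  exists (Cr Cc Cb : nat) (A : algorithm R),
    forall (n : nat) (e : rel 'I_n) (w : 'I_n -> 'I_n -> R) (eps : R),
      simple_graph e -> pos_weights e w -> 0 < eps < 1 ->
      let T := (Cr * (logstar n).+1)%N in
      bandwidth_ok A e w eps T (Cb * (trunc_log 2 n).+1) /\
      weighted_defective_coloring e w eps (run_output A e w eps T) /\
      (forall v, (run_output A e w eps T v)%:R < Cc%:R / eps ^+ 2).
Proof.
exists 4%N, (2 ^ 34)%N, 1%N, (coloring_alg R).
move=> n e w eps [_ e_irr] [_ w_gt0] /andP[eps_gt0 eps_lt1] T.
have run_outputE : run_output (coloring_alg R) e w eps T =1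
                   run_phases e w (schedule n eps) val.
  by move=> v; rewrite /run_output state_coloring_alg take_oversize ?size_schedule.
split; first by rewrite mul1n; apply: bandwidth_coloring_alg.
split=> v.
  by rewrite (eq_defect_w _ _ v run_outputE); apply: run_schedule_defective.
by rewrite run_outputE; apply: run_schedule_lt.
Qed.
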